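(* Let $\mathcal D$ be a finite family of $\sigma$-structures. Then the family $\mathcal O_{\mathcal D}$ of $\sigma$-forests which do not admit a homomorphism to any structure in $\mathcal D$ is regular.
   Context: Fix a type $\sigma$ (finite set of relation symbols with arities); $\sigma$-structures are finite sets with an $r$-ary relation per symbol of arity $r$; homomorphisms are relation-preserving maps. $\mathrm{Inc}(\mathbf A)$ is the bipartite multigraph with parts $V(\mathbf A)$ and the blocks $(R,(x_1,\dots,x_r))$, $(x_1,\dots,x_r)\in R(\mathbf A)$, with one edge joining $x_i$ to the block for each $i$; $\mathbf A$ is a $\sigma$-forest if $\mathrm{Inc}(\mathbf A)$ has no cycles or parallel edges. $\mathbb F$ is the set of isomorphism classes of $\sigma$-forests, $\mathbb F_{\mathrm r}$ that of rooted $\sigma$-forests. $(\mathbf A,a)+(\mathbf B,b)$: disjoint union with $a,b$ identified as new root; $[(\mathbf A,a)]$ forgets the root. $\mathcal O\subseteq\mathbb F$ is regular if there are only finitely many distinct sets $\mathcal O-(\mathbf A,a)=\{(\mathbf B,b)\in\mathbb F_{\mathrm r}:[(\mathbf A,a)+(\mathbf B,b)]\in\mathcal O\}$, $(\mathbf A,a)\in\mathbb F_{\mathrm r}$. *)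

From mathcomp Require Import all_boot.
Set Implicit Arguments. Unset Strict Implicit. Unset Printing Implicit Defensive.

Record signature := Signature { sym : finType; arity : sym -> nat }.

Record sstruct (sg : signature) := SStruct {
  carrier :> finType;
  relof : forall s : sym sg, {set (arity s).-tuple carrier} }.

Section Struct.
Variable sg : signature.

Definition hom_to (A B : sstruct sg) : Prop :=
  exists f : A -> B, forall (s : sym sg) (t : (arity s).-tuple A),
    t \in relof A s -> map_tuple f t \in relof B s.

(* Blocks of A: pairs (R, tuple); those with the tuple in R(A) are the blocks
   of Inc(A). *)
Definition block (A : sstruct sg) := {s : sym sg & (arity s).-tuple A}.

Definition is_block (A : sstruct sg) (b : block A) : bool :=
  tagged b \in relof A (tag b).

Definition inc_node (A : sstruct sg) := (A + block A)%type.

(* adjacency in Inc(A) (x_i joined to block for each i; without parallel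
   edges this is membership of x in the tuple). *)
Definition inc_adj (A : sstruct sg) : rel (inc_node A) :=
  fun u v => match u, v with
  | inl x, inr b => is_block b && (x \in val (tagged b))
  | inr b, inl x => is_block b && (x \in val (tagged b))
  | _, _ => false
  end.

(* Inc(A) has no parallel edges: no tuple in a relation repeats an entry. *)
Definition no_parallel_edges (A : sstruct sg) : Prop :=
  forall (s : sym sg) (t : (arity s).-tuple A), t \in relof A s -> uniq t.

(* Inc(A) has no cycles (of length >= 3; length-2 cycles are parallel edges). *)
Definition inc_acyclic (A : sstruct sg) : Prop :=
  forall p : seq (inc_node A), uniq p -> 2 < size p -> ~~ cycle (@inc_adj A) p.

Definition forest (A : sstruct sg) : Prop := no_parallel_edges A /\ inc_acyclic A.

Record rstruct := RStruct { rs :> sstruct sg; root : rs }.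

(* (A,a) + (B,b): disjoint union with a and b identified (the new root). *)
Definition sum_carrier (A B : rstruct) : finType :=
  (rs A + {y : rs B | y != root B})%type.

Definition sum_inl (A B : rstruct) (x : rs A) : sum_carrier A B := inl x.

Definition sum_inr (A B : rstruct) (y : rs B) : sum_carrier A B :=
  match insub y with Some y' => inr y' | None => inl (root A) end.

Definition sum_struct (A B : rstruct) : sstruct sg :=
  @SStruct sg (sum_carrier A B) (fun s =>
    (map_tuple (@sum_inl A B) @: relof (rs A) s) :|:
    (map_tuple (@sum_inr A B) @: relof (rs B) s)).

Definition sum_rooted (A B : rstruct) : rstruct :=
  @RStruct (sum_struct A B) (inl (root A)).

Definition unroot (A : rstruct) : sstruct sg := rs A.

(* Regularity of a family O of forests (given as an isomorphism-invariant
   predicate): only finitely many distinct sets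
   O - (A,a) = {(B,b) rooted forest : [(A,a)+(B,b)] in O}, (A,a) a rooted forest.
   Sets of (iso classes of) rooted forests are represented by predicates,
   compared on rooted forests. *)
Definition regular (O : sstruct sg -> Prop) : Prop :=
  exists (n : nat) (P : 'I_n -> rstruct -> Prop),
    forall A : rstruct, forest (rs A) ->
      exists i : 'I_n, forall B : rstruct, forest (rs B) ->
        (P i B <-> O (unroot (sum_rooted A B))).

Definition O_fam (k : nat) (D : 'I_k -> sstruct sg) (A : sstruct sg) : Prop :=
  forest A /\ forall j : 'I_k, ~ hom_to A (D j).

End Struct.

From Pilot Require Import Defs.
From mathcomp Require Import all_boot.
Set Implicit Arguments. Unset Strict Implicit. Unset Printing Implicit Defensive.

(* Whether a rooted forest (B,b) completes (A,a) to a member of O_D depends only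
   on the finite "root type" of (A,a): the set of pairs (j, d), d in D j, such
   that some homomorphism A -> D j sends a to d.  Indeed a homomorphism from the
   glued structure is exactly a pair of homomorphisms agreeing at the root, and
   gluing two forests at a vertex yields a forest: in the incidence graph, every
   vertex other than the glued one stays on its own side, so a cycle lives in
   one of the two halves and projects onto a cycle of A or of B. *)

Lemma map_tuple_comp (T1 T2 T3 : Type) n (f : T1 -> T2) (g : T2 -> T3)
    (t : n.-tuple T1) :
  map_tuple g (map_tuple f t) = map_tuple (g \o f) t.
Proof. by apply: val_inj; rewrite /= map_comp. Qed.

Lemma path_lab_const (T : eqType) (e : rel T) (P : pred T) (lab : T -> bool) :
    {in P &, forall u v, e u v -> lab u = lab v} ->
  forall x s, all P (x :: s) -> path e x s -> {in x :: s, forall u, lab u = lab x}.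
Proof.
move=> labE x s; elim: s x => [|y s IHs] x /=; first by move=> _ _ u /[1!inE] /eqP->.
move=> /and3P[Px Py Ps] /andP[exy pys] u /[1!inE] /orP[/eqP-> //|ys_u].
rewrite (IHs y) /= ?Py ?Ps //; exact/esym/labE.
Qed.

Lemma cycle_lab_const_off (T : eqType) (e : rel T) (r : T) (lab : T -> bool) :
    {in predC1 r &, forall u v, e u v -> lab u = lab v} ->
  forall p, uniq p -> cycle e p -> exists c, {in p, forall u, u != r -> lab u = c}.
Proof.
move=> labE p uniq_p cyc_p.
have off_r x q : path e x q -> r \notin x :: q ->
    exists c, {in r :: x :: q, forall u, u != r -> lab u = c}.
  move=> pxq rNxq; exists (lab x) => u /[1!inE] /orP[/eqP-> /eqP //|xq_u _].
  apply: (path_lab_const labE) xq_u => //.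
  by rewrite (all_predC (pred1 r)) has_pred1.
have [rp | rNp] := boolP (r \in p).
  have [i q rot_p] := rot_to rp.
  have [c lab_c] : exists c, {in r :: q, forall u, u != r -> lab u = c}.
    case: q rot_p => [|x q] rot_p; first by exists true => u /[1!inE] ->.
    apply: off_r.
      by move: cyc_p; rewrite -(rot_cycle i) rot_p /= rcons_path => /and3P[_ ->].
    by move: uniq_p; rewrite -(rot_uniq i) rot_p => /andP[].
  by exists c => u; rewrite -(mem_rot i) rot_p; apply: lab_c.
case: p uniq_p cyc_p rNp => [|x q] _; first by exists true.
rewrite /= rcons_path => /andP[pxq _] rNxq.
have [c lab_c] := off_r x q pxq rNxq.
by exists c => u xq_u; apply: lab_c; rewrite inE xq_u orbT.
Qed.

Lemma cycle_map_in (T T' : eqType) (e : rel T) (e' : rel T') (P : pred T)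
    (h : T -> T') (g : T' -> T) :
    {in P &, forall u v, e u v -> e' (h u) (h v)} -> {in P, cancel h g} ->
  forall p, all P p -> uniq p -> cycle e p -> uniq (map h p) && cycle e' (map h p).
Proof.
move=> hE hK p Pp uniq_p cyc_p.
rewrite map_inj_in_uniq ?uniq_p; last by apply: sub_in2 (can_in_inj hK) => u /(allP Pp).
by rewrite cycle_map (sub_in_cycle hE).
Qed.

Lemma eq_map_tuple (T1 T2 : Type) n (f g : T1 -> T2) :
  f =1 g -> @map_tuple n _ _ f =1 map_tuple g.
Proof. by move=> fg t; apply: val_inj; apply: eq_map. Qed.

Lemma map_tupleK (T1 T2 : Type) n (f : T1 -> T2) (g : T2 -> T1) :
  cancel f g -> cancel (@map_tuple n _ _ f) (map_tuple g).
Proof. by move=> fK t; apply: val_inj; apply: mapK. Qed.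

Local Notation root := Defs.root.

Section Structures.
Variable sg : signature.

Lemma cycle_is_block (A : sstruct sg) p (b : block A) :
  cycle (@inc_adj sg A) p -> inr b \in p -> is_block b.
Proof. by move=> cyc_p /(next_cycle cyc_p); case: next => [x /andP[]|]. Qed.

Definition hom (A E : sstruct sg) (f : A -> E) : Prop :=
  forall s (t : (arity s).-tuple A), t \in relof A s -> map_tuple f t \in relof E s.

Lemma hom_comp (A E F : sstruct sg) (f : A -> E) (g : E -> F) :
  hom f -> hom g -> hom (g \o f).
Proof. by move=> hom_f hom_g s t At; rewrite -map_tuple_comp hom_g ?hom_f. Qed.

Definition rooted_hom (A : rstruct sg) (E : sstruct sg) (d : E) : bool :=
  [exists f : {ffun A -> E}, (f (root A) == d) &&
    [forall s, forall t : (arity s).-tuple A,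
       (t \in relof A s) ==> (map_tuple f t \in relof E s)]].

Lemma rooted_homP (A : rstruct sg) (E : sstruct sg) (d : E) :
  reflect (exists2 f : A -> E, hom f & f (root A) = d) (rooted_hom A d).
Proof.
apply: (iffP existsP) => [[f /andP[/eqP fd /forallP hom_f]] | [f hom_f fd]].
  by exists f => // s t; apply/implyP; move/forallP: (hom_f s).
exists (finfun f); rewrite ffunE fd eqxx; apply/'forall_forallP => s t.
by rewrite (eq_map_tuple (ffunE f)); apply/implyP/hom_f.
Qed.

Section Gluing.
Variables A B : rstruct sg.

Local Notation S := (sum_struct A B).
Local Notation inlS := (@sum_inl sg A B).
Local Notation inrS := (@sum_inr sg A B).

Definition projA (z : sum_carrier A B) : A := if z is inl x then x else root A.
Definition projB (z : sum_carrier A B) : B := if z is inr y then val y else root B.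

Lemma sum_inlK : cancel inlS projA.
Proof. by []. Qed.

Lemma sum_inrK : cancel inrS projB.
Proof. by rewrite /sum_inr => y; case: insubP => [y' _ <- | /negbNE/eqP ->]. Qed.

Lemma sum_inr_root : inrS (root B) = inl (root A).
Proof. by rewrite /sum_inr insubF ?eqxx. Qed.

Lemma sum_inr_val (y : {y : B | y != root B}) : inrS (val y) = inr y.
Proof. by rewrite /sum_inr valK. Qed.

Lemma sum_inr_eq_inl (y : B) (x : A) : inrS y = inl x -> x = root A.
Proof. by rewrite /sum_inr; case: insubP => [? _ _ | _ [<-]]. Qed.

Lemma hom_sum_inl : @hom A S inlS.
Proof. by move=> s t At; rewrite inE imset_f. Qed.

Lemma hom_sum_inr : @hom B S inrS.
Proof. by move=> s t Bt; rewrite inE orbC imset_f. Qed.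

Definition glue (E : sstruct sg) (fA : A -> E) (fB : B -> E)
    (z : S) : E :=
  if z is inr y then fB (val y) else fA (projA z).

Lemma hom_glue (E : sstruct sg) (fA : A -> E) (fB : B -> E) :
  hom fA -> hom fB -> fA (root A) = fB (root B) -> hom (glue fA fB).
Proof.
move=> hom_fA hom_fB root_eq s _ /[1!inE] /orP[] /imsetP[t St ->].
  by rewrite map_tuple_comp hom_fA.
have glue_inr : glue fA fB \o inrS =1 fB.
  by move=> y; rewrite /= /sum_inr; case: insubP => [y' _ <- | /negbNE/eqP ->].
by rewrite map_tuple_comp (eq_map_tuple glue_inr) hom_fB.
Qed.

Lemma hom_to_sum (E : sstruct sg) :
  hom_to S E <-> exists d : E, rooted_hom A d && rooted_hom B d.
Proof.
split=> [[f hom_f] | [d /andP[/rooted_homP[fA hom_fA fAd] /rooted_homP[fB hom_fB fBd]]]].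
  exists (f (inl (root A))); apply/andP; split; apply/rooted_homP.
    by exists (f \o inlS); first exact: hom_comp hom_sum_inl hom_f.
  exists (f \o inrS); first exact: hom_comp hom_sum_inr hom_f.
  by rewrite /= sum_inr_root.
by exists (glue fA fB); apply: hom_glue; rewrite ?fAd ?fBd.
Qed.

Lemma no_parallel_edges_sum :
  no_parallel_edges A -> no_parallel_edges B -> no_parallel_edges S.
Proof.
move=> npA npB s _ /[1!inE] /orP[] /imsetP[t St ->] /=.
  by rewrite (map_inj_uniq (can_inj sum_inlK)) npA.
by rewrite (map_inj_uniq (can_inj sum_inrK)) npB.
Qed.

Definition from_A_block (b : block S) : bool :=
  tagged b \in map_tuple inlS @: relof A (tag b).
Definition from_B_block (b : block S) : bool :=
  tagged b \in map_tuple inrS @: relof B (tag b).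

Lemma is_block_sum (b : block S) : is_block b = from_A_block b || from_B_block b.
Proof. by rewrite /is_block inE. Qed.

Definition from_A (u : inc_node S) : bool :=
  match u with
  | inl (inl _) => true
  | inl (inr _) => false
  | inr b => from_A_block b
  end.

Definition from_B (u : inc_node S) : bool :=
  match u with
  | inl (inl x) => x == root A
  | inl (inr _) => true
  | inr b => from_B_block b
  end.

Definition glued_root : inc_node S := inl (inl (root A)).

Lemma from_A_incident (z : S) (b : block S) :
  is_block b -> z \in val (tagged b) -> inl z != glued_root ->
  from_A (inl z) = from_A_block b.
Proof.
rewrite is_block_sum; case: z => [x | y] /=.
  have [// | _ /= /imsetP[t _ ->]] := boolP (from_A_block b).
  by case/mapP=> y _ /esym/sum_inr_eq_inl ->; rewrite eqxx.
by have [/imsetP[t _ ->] _ /mapP[] | //] := boolP (from_A_block b).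
Qed.

Lemma from_A_adj :
  {in predC1 glued_root &, forall u v, inc_adj u v -> from_A u = from_A v}.
Proof.
move=> [z | b] [z' | b'] //= /[!inE] zr z'r /andP[blk_b zb].
  exact: from_A_incident.
exact/esym/from_A_incident.
Qed.

Definition to_A (u : inc_node S) : inc_node A :=
  match u with
  | inl z => inl (projA z)
  | inr b => inr (existT _ (tag b) (map_tuple projA (tagged b)))
  end.

Definition of_A (u : inc_node A) : inc_node S :=
  match u with
  | inl x => inl (inlS x)
  | inr b => inr (existT _ (tag b) (map_tuple inlS (tagged b)))
  end.

Lemma to_AK : {in from_A, cancel to_A of_A}.
Proof.
move=> [[x | y] | [s t]] //= /imsetP[t0 _ /= ->] /=.
by rewrite (map_tupleK sum_inlK).
Qed.

Lemma to_A_adj :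
  {in from_A &, forall u v, inc_adj u v -> inc_adj (to_A u) (to_A v)}.
Proof.
have incident x (b : block S) : from_A_block b -> inl x \in val (tagged b) ->
    inc_adj (inl (projA (inl x))) (to_A (inr b)).
  case: b => s t /imsetP[t0 At0 /= ->] /=.
  rewrite (map_tupleK sum_inlK) /is_block /= At0 (mapK sum_inlK).
  by case/mapP=> y y_t0 [->].
move=> [[x | y] | b] [[x' | y'] | b'] //= u_A v_A /andP[_ xb].
  exact: incident v_A xb.
exact: incident u_A xb.
Qed.

Definition to_B (u : inc_node S) : inc_node B :=
  match u with
  | inl z => inl (projB z)
  | inr b => inr (existT _ (tag b) (map_tuple projB (tagged b)))
  end.

Definition of_B (u : inc_node B) : inc_node S :=
  match u with
  | inl y => inl (inrS y)
  | inr b => inr (existT _ (tag b) (map_tuple inrS (tagged b)))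
  end.

Lemma to_BK : {in from_B, cancel to_B of_B}.
Proof.
move=> [[x | y] | [s t]] //=.
- by move=> /eqP ->; rewrite sum_inr_root.
- by rewrite sum_inr_val.
by move=> /imsetP[t0 _ /= ->] /=; rewrite (map_tupleK sum_inrK).
Qed.

Lemma to_B_adj :
  {in from_B &, forall u v, inc_adj u v -> inc_adj (to_B u) (to_B v)}.
Proof.
have incident z (b : block S) : from_B_block b -> z \in val (tagged b) ->
    inc_adj (inl (projB z)) (to_B (inr b)).
  case: b => s t /imsetP[t0 Bt0 /= ->] /=.
  rewrite (map_tupleK sum_inrK) /is_block /= Bt0 (mapK sum_inrK).
  by case/mapP=> y y_t0 ->; rewrite sum_inrK.
move=> [z | b] [z' | b'] //= u_B v_B /andP[_ zb].
  exact: incident v_B zb.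
exact: incident u_B zb.
Qed.

Lemma inc_acyclic_sum : inc_acyclic A -> inc_acyclic B -> inc_acyclic S.
Proof.
move=> acA acB p uniq_p size_p; apply/negP => cyc_p.
have [c lab_c] := cycle_lab_const_off from_A_adj uniq_p cyc_p.
have off_root u : u \in p -> u = glued_root \/ from_A u = c.
  by move=> pu; have [-> | /(lab_c u pu)] := eqVneq u glued_root; [left | right].
case: c {lab_c} off_root => off_root.
  have A_p : all from_A p by apply/allP => u /off_root[-> | A_u].
  have /andP[] := cycle_map_in to_A_adj to_AK A_p uniq_p cyc_p.
  by move=> /acA; rewrite size_map => /(_ size_p) /negP.
have B_p : all from_B p.
  apply/allP => -[[x | y] | b] pu //=.
    by case: (off_root _ pu) => [[->] | //]; rewrite eqxx.
  have := cycle_is_block cyc_p pu; rewrite is_block_sum.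
  by case: (off_root _ pu) => // /= ->.
have /andP[] := cycle_map_in to_B_adj to_BK B_p uniq_p cyc_p.
by move=> /acB; rewrite size_map => /(_ size_p) /negP.
Qed.

Lemma forest_sum : forest A -> forest B -> forest S.
Proof.
move=> [npA acA] [npB acB].
by split; [exact: no_parallel_edges_sum | exact: inc_acyclic_sum].
Qed.
End Gluing.
End Structures.

Section Obstructions.
Variables (sg : signature) (k : nat) (D : 'I_k -> sstruct sg).

Definition root_type (A : rstruct sg) : {set {j : 'I_k & D j}} :=
  [set p | rooted_hom A (tagged p)].

Lemma O_fam_sum (A B : rstruct sg) : forest A -> forest B ->
  O_fam D (sum_struct A B) <-> [disjoint root_type A & root_type B].
Proof.
move=> forA forB; split=> [[_ noHom] | disjAB].
  apply/pred0P => -[j d] /=; rewrite !inE /=; apply/negbTE/negP => homAB.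
  by apply: (noHom j); apply/hom_to_sum; exists d.
split=> [|j /hom_to_sum[d homAB]]; first exact: forest_sum.
by move: disjAB => /pred0P /(_ (Tagged (fun j => D j) d)); rewrite /= !inE homAB.
Qed.

End Obstructions.

Theorem corollary3p4 (sg : signature) (k : nat) (D : 'I_k -> sstruct sg) :
  regular (O_fam D).
Proof.
pose types := {set {j : 'I_k & D j}}.
exists #|{: types}|, (fun i B => [disjoint (enum_val i : types) & root_type D B]).
move=> A forA; exists (enum_rank (root_type D A)) => B forB.
by rewrite enum_rankK; apply: iff_sym; apply: O_fam_sum.
Qed.
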